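(* Every group of prime order is DRR-detecting (and therefore GRR-detecting).
   Context: For a group $R$ and $S\subseteq R$, the Cayley digraph $\mathrm{Cay}(R,S)$ has vertex set $R$ and an arc from $r$ to $sr$ whenever $s\in S$. It is a DRR if $\mathrm{Aut}(\mathrm{Cay}(R,S))$ equals the right regular representation $\hat R$, and a GRR if additionally $S=S^{-1}$. $\mathrm{Aut}(R)_S$ is the group of automorphisms of $R$ fixing $S$ setwise. $R$ is DRR-detecting if for every $S\subseteq R$, $\mathrm{Aut}(R)_S=1$ implies $\mathrm{Cay}(R,S)$ is a DRR; GRR-detecting if for every $S\subseteq R$ with $S=S^{-1}$, $\mathrm{Aut}(R)_S=1$ implies $\mathrm{Cay}(R,S)$ is a GRR. *)

From mathcomp Require Import all_boot all_fingroup.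
Set Implicit Arguments. Unset Strict Implicit. Unset Printing Implicit Defensive.
Local Open Scope group_scope.

Section Cayley.
Variable gT : finGroupType.

(* Arc of Cay(R,S) from r to s r (s in S): i.e. y * x^-1 \in S. *)
Definition cay_arc (S : {set gT}) (x y : gT) : bool := (y * x^-1) \in S.

Definition cay_aut (S : {set gT}) : {set {perm gT}} :=
  [set f : {perm gT} | [forall x, forall y, cay_arc S (f x) (f y) == cay_arc S x y]].

Definition right_regular : {set {perm gT}} :=
  [set f : {perm gT} | [exists g : gT, [forall x, f x == x * g]]].

Definition is_DRR (S : {set gT}) : Prop := cay_aut S = right_regular.
Definition is_GRR (S : {set gT}) : Prop := S^-1 = S /\ is_DRR S.

Definition AutS (S : {set gT}) : {set {perm gT}} :=
  [set f in Aut [set: gT] | f @: S == S].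

Definition DRR_detecting : Prop :=
  forall S : {set gT}, AutS S = [set 1] -> is_DRR S.
Definition GRR_detecting : Prop :=
  forall S : {set gT}, S^-1 = S -> AutS S = [set 1] -> is_GRR S.
End Cayley.

From mathcomp Require Import all_boot all_algebra all_fingroup all_solvable.
Set Implicit Arguments. Unset Strict Implicit. Unset Printing Implicit Defensive.
Import GRing.Theory.
Local Open Scope group_scope.

(* Let A be the automorphism group of Cay(R, S) and A_1 the stabiliser of 1
   in A.  Conjugating by right translations shows that a subset X of R is
   A_1-invariant exactly when every element of A is also an automorphism of
   Cay(R, X).  For abelian R and a prime q not dividing |R|, the adjacency
   matrix of Cay(R, X) over F_q is a sum of commuting translation matrices, so
   its q-th power is the adjacency matrix of Cay(R, {x^q | x in X}); since
   automorphisms of Cay(R, X) preserve the matrix, they preserve its powers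
   (Schur's multiplier argument).  Hence A_1-invariant sets are stable under
   the power maps x |-> x^m with m coprime to |R|.
   When |R| = p is prime, an h in A_1 maps a <> 1 to some a^m with p not
   dividing m; comparing the orbits of a and a^k then shows that x^m lies in
   the A_1-orbit of x for every x, so x |-> x^m is an automorphism of R that
   fixes S.  By hypothesis it is the identity, hence h a = a, A_1 = 1, and A
   is the right regular representation. *)

Section Frobenius.
Local Open Scope ring_scope.
Variables (R : pzRingType) (q : nat).
Hypotheses (q_prime : prime q) (qR0 : q%:R = 0 :> R).

Lemma exprD_prime_comm (x y : R) : GRing.comm x y ->
  (x + y) ^+ q = x ^+ q + y ^+ q.
Proof.
move=> cxy; have q_pred := prednK (prime_gt0 q_prime).
rewrite exprDn_comm // big_ord_recr subnn -q_pred big_ord_recl /= q_pred.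
rewrite subn0 mulr1 mul1r bin0 binn big1 ?addr0 // => i _.
have /dvdnP[c ->] : (q %| 'C(q, bump 0 i))%N.
  by apply: prime_dvd_bin => //=; rewrite -{2}q_pred ltnS.
by rewrite mulrnA -mulr_natr qR0 mulr0.
Qed.

Lemma expr_sum_prime_comm (I : Type) (r : seq I) (P : pred I) (F : I -> R) :
  (forall i j, GRing.comm (F i) (F j)) ->
  (\sum_(i <- r | P i) F i) ^+ q = \sum_(i <- r | P i) F i ^+ q.
Proof.
move=> cF; pose frob_comm y z := y ^+ q = z /\ forall j, GRing.comm (F j) y.
suff [] : frob_comm (\sum_(i <- r | P i) F i) (\sum_(i <- r | P i) F i ^+ q).
  by [].
apply: big_rec2 => [|i y z _ [<- cFy]].
  by split=> [|j]; [rewrite expr0n gtn_eqF ?prime_gt0 | exact: commr0].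
by split=> [|j]; [rewrite exprD_prime_comm | exact: commrD].
Qed.

End Frobenius.

Lemma bool_natr_inj (R : nzRingType) : injective (fun b : bool => b%:R : R)%R.
Proof. by case=> [] [] // /eqP; rewrite ?oner_eq0 // eq_sym oner_eq0. Qed.

Section CayleyAutomorphisms.
Variable gT : finGroupType.
Implicit Types (S X : {set gT}) (h : {perm gT}).

Lemma cay_autP X h :
  reflect (forall x y, cay_arc X (h x) (h y) = cay_arc X x y) (h \in cay_aut X).
Proof.
rewrite inE; apply: (iffP forallP) => [hX x y | hX x].
  by apply/eqP; move/forallP: (hX x).
by apply/forallP => y; rewrite hX.
Qed.

Definition rtransl (c : gT) : {perm gT} := perm (mulIg c).

Lemma rtranslE c x : rtransl c x = x * c.
Proof. by rewrite permE. Qed.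

Lemma cay_arc_mulr X c x y : cay_arc X (x * c) (y * c) = cay_arc X x y.
Proof. by rewrite /cay_arc invMg mulgA mulgK. Qed.

Lemma rtransl_cay_aut X c : rtransl c \in cay_aut X.
Proof. by apply/cay_autP => x y; rewrite !rtranslE cay_arc_mulr. Qed.

Lemma group_set_cay_aut X : group_set (cay_aut X).
Proof.
apply/group_setP; split; first by apply/cay_autP => x y; rewrite !perm1.
move=> f h /cay_autP fX /cay_autP hX; apply/cay_autP => x y.
by rewrite !permM hX fX.
Qed.

Canonical cay_aut_group X := group (group_set_cay_aut X).

Lemma cay_aut_stab1P X h :
  reflect (h \in cay_aut X /\ h 1 = 1) (h \in 'C_(cay_aut X)[1 | 'P]).
Proof.
rewrite in_setI; apply: (iffP andP) => [[hX /astab1P h1] | [hX h1]] //.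
by split=> //; apply/astab1P.
Qed.

Lemma acts_stab1_cay_aut S X :
  [acts 'C_(cay_aut S)[1 | 'P], on X | 'P] -> cay_aut S \subset cay_aut X.
Proof.
move=> /actsP stabX; apply/subsetP => h hS; apply/cay_autP => x y.
pose k := rtransl x * h * rtransl (h x)^-1.
have kE z : k z = h (z * x) * (h x)^-1 by rewrite !permM !rtranslE.
have k_stab : k \in 'C_(cay_aut S)[1 | 'P].
  by apply/cay_aut_stab1P; rewrite !groupM ?rtransl_cay_aut // kE mul1g mulgV.
by rewrite /cay_arc -[y * x^-1 \in X](stabX k k_stab) /= apermE kE mulgKV.
Qed.

Lemma cay_aut_acts_stab1 S X :
  cay_aut S \subset cay_aut X -> [acts 'C_(cay_aut S)[1 | 'P], on X | 'P].
Proof.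
move=> /subsetP autSX.
apply/actsP => h /cay_aut_stab1P[/autSX/cay_autP hX h1] x.
by have := hX 1 x; rewrite /cay_arc h1 invg1 !mulg1.
Qed.

End CayleyAutomorphisms.

Section CayleyMatrix.
Local Open Scope ring_scope.
Variables (R : pzRingType) (gT : finGroupType).
Implicit Type X : {set gT}.

Definition ltransl_mx (a : gT) : 'M[R]_#|gT| :=
  \matrix_(i, j) (enum_val j == (a * enum_val i)%g)%:R.

Definition cayley_mx X : 'M[R]_#|gT| :=
  \matrix_(i, j) (cay_arc X (enum_val i) (enum_val j))%:R.

Lemma cayley_mxE X x y :
  cayley_mx X (enum_rank x) (enum_rank y) = (cay_arc X x y)%:R.
Proof. by rewrite mxE !enum_rankK. Qed.

Lemma ltransl_mxM a b : ltransl_mx a * ltransl_mx b = ltransl_mx (b * a)%g.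
Proof.
apply/matrixP => i j; rewrite -mulmxE !mxE.
rewrite (bigD1 (enum_rank (a * enum_val i)%g)) //= big1 ?addr0.
  by rewrite !mxE enum_rankK eqxx mul1r mulgA.
move=> k /eqP k_neq; rewrite !mxE; case: eqP => [k_def|]; last by rewrite mul0r.
by case: k_neq; rewrite -k_def enum_valK.
Qed.

Lemma ltransl_mx1 : ltransl_mx 1 = 1.
Proof.
by apply/matrixP => i j; rewrite !mxE mul1g (inj_eq enum_val_inj) eq_sym.
Qed.

Lemma ltransl_mxX a k : ltransl_mx a ^+ k = ltransl_mx (a ^+ k)%g.
Proof.
elim: k => [|k IHk]; first by rewrite expr0 ltransl_mx1.
by rewrite exprSr IHk ltransl_mxM expgS.
Qed.

Lemma cayley_mx_sum X : cayley_mx X = \sum_(a in X) ltransl_mx a.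
Proof.
apply/matrixP => i j; rewrite summxE !mxE.
set c := (enum_val j * (enum_val i)^-1)%g.
have transl_c a : (enum_val j == (a * enum_val i)%g) = (a == c).
  by rewrite /c; apply/eqP/eqP => [->|->]; rewrite ?mulgK ?mulgKV.
under eq_bigr do rewrite mxE transl_c.
rewrite /cay_arc -/c; have [cX | /negPf cX] := boolP (c \in X).
  by rewrite (bigD1 c) //= eqxx big1 ?addr0 // => a /andP[_ /negPf ->].
by rewrite big1 // => a aX; case: eqP => // ac; rewrite -ac aX in cX.
Qed.

Definition relabel_invariant (h : gT -> gT) (M : 'M[R]_#|gT|) :=
  forall x y,
    M (enum_rank (h x)) (enum_rank (h y)) = M (enum_rank x) (enum_rank y).

Lemma relabel_invariantM (h : {perm gT}) M N :
  relabel_invariant h M -> relabel_invariant h N -> relabel_invariant h (M * N).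
Proof.
move=> hM hN x y; rewrite -mulmxE !mxE.
pose hr (k : 'I_#|gT|) := enum_rank (h (enum_val k)).
have hr_inj : injective hr.
  by move=> k1 k2 /enum_rank_inj /perm_inj /enum_val_inj.
rewrite (reindex_inj hr_inj); apply: eq_bigr => k _.
by rewrite hM hN !enum_valK.
Qed.

Lemma relabel_invariantX (h : {perm gT}) M k :
  relabel_invariant h M -> relabel_invariant h (M ^+ k).
Proof.
move=> hM; elim: k => [|k IHk].
  by move=> x y; rewrite expr0 !mxE !(inj_eq enum_rank_inj) (inj_eq perm_inj).
by rewrite exprS; apply: relabel_invariantM.
Qed.

Lemma cay_aut_relabel_invariant X (h : {perm gT}) :
  h \in cay_aut X -> relabel_invariant h (cayley_mx X).
Proof. by move=> /cay_autP hX x y; rewrite !cayley_mxE hX. Qed.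

End CayleyMatrix.

Lemma expg_coprime_inj (gT : finGroupType) m :
  coprime #|gT| m -> injective (fun x : gT => x ^+ m).
Proof.
rewrite -cardsT => co.
apply: (can_inj (g := fun x => x ^+ expg_invn [set: gT] m)) => x.
by rewrite expgK ?inE.
Qed.

Section PowerMaps.
Variable gT : finGroupType.
Hypothesis gT_comm : forall x y : gT, commute x y.
Implicit Types S X : {set gT}.

Lemma cayley_mx_expn_prime (R : pzRingType) q X :
  prime q -> (q%:R = 0 :> R)%R -> coprime #|gT| q ->
  (cayley_mx R X ^+ q)%R = cayley_mx R [set x ^+ q | x in X].
Proof.
move=> q_prime qR0 co; rewrite !cayley_mx_sum expr_sum_prime_comm //.
- rewrite big_imset /=; last by move=> x y _ _; apply: expg_coprime_inj.
  by apply: eq_bigr => x _; rewrite ltransl_mxX.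
- by rewrite -idmxE -raddfMn /= qR0 raddf0.
- by move=> a b; rewrite /GRing.comm !ltransl_mxM gT_comm.
Qed.

Lemma cay_aut_sub_expg_prime q X : prime q -> coprime #|gT| q ->
  cay_aut X \subset cay_aut [set x ^+ q | x in X].
Proof.
move=> q_prime co; apply/subsetP => h /(cay_aut_relabel_invariant 'F_q).
move=> /(relabel_invariantX q); rewrite cayley_mx_expn_prime ?pchar_Fp_0 //.
move=> hXq; apply/cay_autP => x y; apply: (@bool_natr_inj 'F_q).
by rewrite /= -!cayley_mxE hXq.
Qed.

Lemma cay_aut_sub_expg m X : coprime #|gT| m ->
  cay_aut X \subset cay_aut [set x ^+ m | x in X].
Proof.
elim/ltn_ind: m X => m IHm X co.
have [m_le1 | m_gt1] := leqP m 1.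
  suff -> : [set x ^+ m | x in X] = X by [].
  (* m = 0 is coprime to #|gT| only for the trivial group. *)
  rewrite -[RHS]imset_id; apply: eq_imset => x.
  case: m m_le1 co {IHm} => [_ | [_ _ | //]]; last exact: expg1.
  rewrite /coprime gcdn0 => /eqP gT1; rewrite expg0.
  by have := expg_cardG (in_setT x); rewrite cardsT gT1 expg1.
have r_prime : prime (pdiv m) by rewrite pdiv_prime.
have m_def : m = (m %/ pdiv m * pdiv m)%N by rewrite divnK ?pdiv_dvd.
have /andP[co_quo co_r] : coprime #|gT| (m %/ pdiv m) && coprime #|gT| (pdiv m).
  by rewrite -coprimeMr -m_def.
have -> : [set x ^+ m | x in X] =
          [set y ^+ pdiv m | y in [set x ^+ (m %/ pdiv m) | x in X]].
  by rewrite -imset_comp; apply: eq_imset => x /=; rewrite -expgM -m_def.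
apply: subset_trans (IHm _ _ _ co_quo) (cay_aut_sub_expg_prime _ r_prime co_r).
by rewrite ltn_Pdiv ?prime_gt1 // ltnW.
Qed.

Lemma acts_stab1_expg S X m : coprime #|gT| m ->
  [acts 'C_(cay_aut S)[1 | 'P], on X | 'P] ->
  [acts 'C_(cay_aut S)[1 | 'P], on [set x ^+ m | x in X] | 'P].
Proof.
move=> co /acts_stab1_cay_aut autSX; apply: cay_aut_acts_stab1.
exact: subset_trans autSX (cay_aut_sub_expg _ co).
Qed.

Definition expg_perm m (co : coprime #|gT| m) : {perm gT} :=
  perm (expg_coprime_inj co).

Lemma expg_permE m (co : coprime #|gT| m) x : expg_perm co x = x ^+ m.
Proof. by rewrite permE. Qed.

Lemma expg_perm_AutS S m (co : coprime #|gT| m) :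
  {in S, forall s, s ^+ m \in S} -> expg_perm co \in AutS S.
Proof.
move=> S_expg; rewrite inE; apply/andP; split.
  rewrite inE; apply/andP; split; first by apply/subsetP => x; rewrite inE.
  by apply/morphicP => x y _ _; rewrite !expg_permE expgMn.
rewrite eqEcard card_imset ?leqnn ?andbT; last exact: perm_inj.
by apply/subsetP => _ /imsetP[s sS ->]; rewrite expg_permE S_expg.
Qed.

End PowerMaps.

Section PrimeOrder.
Variable gT : finGroupType.
Hypothesis gT_prime : prime #|gT|.
Variable S : {set gT}.

Let G0 := 'C_(cay_aut S)[1 | 'P].

Lemma prime_order_commute (x y : gT) : commute x y.
Proof.
have /centsP gT_abelian : abelian [set: gT].
  by apply/cyclic_abelian/prime_cyclic; rewrite cardsT.
by apply: gT_abelian; rewrite inE.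
Qed.

Lemma prime_order_coprime (x : gT) k : x ^+ k != 1 -> coprime #|gT| k.
Proof.
rewrite prime_coprime //; apply: contra => /dvdnP[c ->].
by rewrite mulnC expgM -cardsT expg_cardG ?inE ?expg1n.
Qed.

Lemma prime_order_cycle (x a : gT) : a != 1 -> x \in <[a]>.
Proof.
by move=> a_neq1; rewrite -(nt_gen_prime (G := [set: gT])) ?cardsT ?inE ?a_neq1.
Qed.

Lemma expg_orbit_sub a k : a != 1 -> coprime #|gT| k ->
  [set x ^+ k | x in orbit 'P G0 a] \subset orbit 'P G0 (a ^+ k).
Proof.
move=> a_neq1 co; set k' := expg_invn [set: gT] k.
have coT : coprime #|[set: gT]| k by rewrite cardsT.
have expgK' x : x ^+ k ^+ k' = x := expgK coT (in_setT x).
have co' : coprime #|gT| k'.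
  by apply: (@prime_order_coprime (a ^+ k)); rewrite expgK'.
have acts_Z :=
  acts_stab1_expg prime_order_commute co' (acts_orbit 'P (a ^+ k) (subsetT G0)).
have orbit_a : orbit 'P G0 a \subset [set x ^+ k' | x in orbit 'P G0 (a ^+ k)].
  by rewrite (acts_sub_orbit _ acts_Z) -{1}(expgK' a); apply/imset_f/orbit_refl.
apply: subset_trans (imsetS (fun x => x ^+ k) orbit_a) _.
rewrite -imset_comp; apply/subsetP => _ /imsetP[y y_orb ->].
by rewrite /= expgAC expgK'.
Qed.

Lemma stab1_expg_in_orbit h a m : a != 1 -> h \in G0 -> h a = a ^+ m ->
  forall x, x ^+ m \in orbit 'P G0 x.
Proof.
move=> a_neq1 hG0 ha x.
have /cycleP[k ->] := prime_order_cycle x a_neq1.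
have [co | nco] := boolP (coprime #|gT| k).
  rewrite -expgM mulnC expgM -ha; apply: (subsetP (expg_orbit_sub a_neq1 co)).
  exact/imset_f/(mem_orbit 'P a hG0).
have /eqP -> : a ^+ k == 1 by apply: contraNT nco; apply: prime_order_coprime.
by rewrite expg1n orbit_refl.
Qed.

Hypothesis AutS1 : AutS S = [set 1].

Lemma stab1_cay_aut_trivial h : h \in G0 -> h = 1.
Proof.
move=> hG0; have [_ h1] := cay_aut_stab1P _ _ hG0.
apply/permP => a; rewrite perm1; have [-> // | a_neq1] := eqVneq a 1.
have /cycleP[m ha] := prime_order_cycle (h a) a_neq1.
have co : coprime #|gT| m.
  by apply: (@prime_order_coprime a); rewrite -ha -h1 (inj_eq perm_inj).
have S_expg : {in S, forall s, s ^+ m \in S}.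
  move=> s sS; apply: (subsetP _ _ (stab1_expg_in_orbit a_neq1 hG0 ha s)).
  by rewrite (acts_sub_orbit _ (cay_aut_acts_stab1 (subxx _))).
have := expg_perm_AutS prime_order_commute co S_expg.
by rewrite AutS1 inE => /eqP/permP/(_ a); rewrite expg_permE perm1 ha.
Qed.

Lemma prime_order_DRR : is_DRR S.
Proof.
apply/setP => f; apply/idP/idP => [fS | ].
  have f_stab : f * rtransl (f 1)^-1 \in G0.
    apply/cay_aut_stab1P.
    by rewrite groupM ?rtransl_cay_aut // permM rtranslE mulgV.
  have fE x : f x * (f 1)^-1 = x.
    have /permP/(_ x) := stab1_cay_aut_trivial f_stab.
    by rewrite permM rtranslE perm1.
  rewrite inE; apply/existsP; exists (f 1); apply/forallP => x.
  by rewrite -{2}(fE x) mulgKV.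
rewrite inE => /existsP[c /forallP fE]; apply/cay_autP => x y.
by rewrite (eqP (fE x)) (eqP (fE y)) cay_arc_mulr.
Qed.

End PrimeOrder.

Theorem proposition4p2 (gT : finGroupType) :
  prime #|[set: gT]| -> DRR_detecting gT /\ GRR_detecting gT.
Proof.
rewrite cardsT => gT_prime; have DRR := prime_order_DRR gT_prime.
by split=> [// | S SV /DRR]; split.
Qed.
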